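(* Let $a,b,c$ be positive integers and $\vec k=(a,b,c)$. Every $\pi\in\mathcal D_{(a,b,c)}$ can be written uniquely as $$\pi=S^{a}W^{\ell_1}S^{b}W^{\ell_2}S^{c}W^{a+b+c-\ell_1-\ell_2}$$ with integers $\ell_1,\ell_2$ satisfying $0\le\ell_1\le a$, $0\le\ell_2$, $\ell_1+\ell_2\le a+b$ (here $W^{n}$ denotes $n$ consecutive letters $W$). Define $\theta$ on $\mathcal D_{(a,b,c)}$ by $$\theta(\pi)=\begin{cases} S^{a}W^{a-\ell_1}S^{b}W^{b-\ell_2}S^{c}W^{c+\ell_1+\ell_2}, & \text{if } \ell_2\le b,\\ S^{a}W^{a+b-\ell_1-\ell_2}S^{b}W^{\ell_2}S^{c}W^{c+\ell_1}, & \text{otherwise.}\end{cases}$$ Then $\theta$ is an involution on $\mathcal D_{(a,b,c)}$ satisfying $\mathrm{area}(\pi)=\mathrm{depth}(\theta(\pi))$ and $\mathrm{depth}(\pi)=\mathrm{area}(\theta(\pi))$ for all $\pi\in\mathcal D_{(a,b,c)}$.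
   Context: For $\vec k=(k_1,\dots,k_\ell)$ put $|\vec k|=\sum k_i$, $N=|\vec k|+\ell$. A $\vec k$-Dyck path is a word $\pi=\pi_1\cdots\pi_N$ containing the letters $S^{k_1},\dots,S^{k_\ell}$ exactly once each and in this order, together with $|\vec k|$ letters $W$, such that all starting ranks are nonnegative, where $r_1=0$, $r_{i+1}=r_i+k_j$ if $\pi_i=S^{k_j}$ and $r_{i+1}=r_i-1$ if $\pi_i=W$. $\mathcal D_{\vec k}$ is the set of such paths. $\mathrm{area}(\pi)=\sum_j a_j$ where $a_j$ is the starting rank of $S^{k_j}$. Filling algorithm $\eta_*$: in a tableau of $\ell$ top-justified columns, column $i$ having $k_i+1$ cells, place $1$ at the top of column 1; for $i=2,\dots,N$, call an entry active if it is currently the bottom entry of a column $i'$ not yet containing $k_{i'}+1$ entries; if $\pi_i=W$ place $i$ immediately below the largest active entry, otherwise place $i$ at the top of the first empty column. Ranking algorithm $\gamma_*$: column 1 gets ranks $0,\dots,k_1$ top to bottom; for $i\ge2$, if the top entry of column $i$ of $\eta_*(\pi)$ is $A+1$ and $A$ has rank $\alpha$, column $i$ gets ranks $\alpha,\dots,\alpha+k_i$ top to bottom. $\mathrm{depth}(\pi)$ is the sum of the first-row ranks. *)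

From mathcomp Require Import all_boot all_order all_algebra.
Set Implicit Arguments.
Unset Strict Implicit.
Unset Printing Implicit Defensive.
Import GRing.Theory Num.Theory.

(* Letters of a k-Dyck path: [S j] stands for the letter S^{k_j}
   (columns/letters are indexed from 0), [W] for the west step. *)
Definition letter := option nat.
Definition S (j : nat) : letter := Some j.
Definition W : letter := None.

Definition sletters (pi : seq letter) : seq nat := pmap id pi.

Definition rstep (k : seq nat) (r : int) (l : letter) : int :=
  match l with
  | Some j => (r + (nth 0 k j)%:Z)%R
  | None => (r - 1)%R
  end.

Definition start_ranks (k : seq nat) (pi : seq letter) : seq int :=
  take (size pi) (0%R :: scanl (rstep k) 0%R pi).

Definition is_kDyck (k : seq nat) (pi : seq letter) : bool :=
  [&& sletters pi == iota 0 (size k),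
      count (fun l => l == W) pi == sumn k &
      all (fun r : int => (0 <= r)%R) (start_ranks k pi)].

Definition area (k : seq nat) (pi : seq letter) : int :=
  (\sum_(p <- zip (start_ranks k pi) pi | p.2 != W) p.1)%R.

(* A tableau is a list of columns (0-indexed); each column lists its
   entries from top to bottom. Column i has room for k_i + 1 entries. *)
Definition tableau := seq (seq nat).

Definition column (T : tableau) (c : nat) : seq nat := nth [::] T c.
Definition bottom (T : tableau) (c : nat) : nat := last 0 (column T c).

Definition active_cols (k : seq nat) (T : tableau) : seq nat :=
  [seq c <- iota 0 (size T) | 0 < size (column T c) < (nth 0 k c).+1].

Definition max_active_col (k : seq nat) (T : tableau) : nat :=
  let act := active_cols k T in
  foldl (fun best c => if bottom T best < bottom T c then c else best)
        (head 0 act) act.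

Definition fill_step (k : seq nat) (T : tableau) (il : nat * letter) : tableau :=
  let: (i, l) := il in
  if i == 1 then set_nth [::] T 0 [:: 1]
  else match l with
       | None => let c := max_active_col k T in
                 set_nth [::] T c (rcons (column T c) i)
       | Some _ => let c := find (fun col => col == [::]) T in
                   set_nth [::] T c [:: i]
       end.

Definition fill (k : seq nat) (pi : seq letter) : tableau :=
  foldl (fill_step k) (nseq (size k) [::]) (zip (iota 1 (size pi)) pi).

Definition col_of (T : tableau) (e : nat) : nat := find (fun col => e \in col) T.
Definition pos_of (T : tableau) (e : nat) : nat := index e (column T (col_of T e)).

(* ranks of the top (first-row) entries of the columns, column by column:
   column 0 starts at rank 0; for column i >= 1 with top entry A+1, the top
   rank is the rank of A, i.e. (top rank of A's column) + (row of A). *)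
Definition top_ranks (T : tableau) : seq nat :=
  foldl (fun acc i =>
           rcons acc
             (if i == 0 then 0
              else let A := (head 0 (column T i)).-1 in
                   nth 0 acc (col_of T A) + pos_of T A))
        [::] (iota 0 (size T)).

Definition depth (k : seq nat) (pi : seq letter) : nat :=
  sumn (top_ranks (fill k pi)).

Definition path3 (l1 l2 l3 : nat) : seq letter :=
  [:: S 0] ++ nseq l1 W ++ [:: S 1] ++ nseq l2 W ++ [:: S 2] ++ nseq l3 W.

(* l1, l2 read off from pi = S^a W^l1 S^b W^l2 S^c W^... *)
Definition ell1 (pi : seq letter) : nat := (index (S 1) pi).-1.
Definition ell2 (pi : seq letter) : nat := (index (S 2) pi - index (S 1) pi).-1.

Definition theta (a b c : nat) (pi : seq letter) : seq letter :=
  let l1 := ell1 pi in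
  let l2 := ell2 pi in
  if l2 <= b then path3 (a - l1) (b - l2) (c + l1 + l2)
  else path3 (a + b - l1 - l2) l2 (c + l1).

(* A path of D_(a,b,c) is S^a W^l1 S^b W^l2 S^c W^(a+b+c-l1-l2),
   and (l1, l2) is read off from the positions of S^b and S^c; its area is
   (a - l1) + (a + b - l1 - l2).  Running the filling algorithm up to S^c gives
   an explicit tableau: column 0 holds 1..l1+1 (followed, when l2 > b, by the
   l2 - b entries that no longer fit in column 1), column 1 holds l1+2 and the
   next min(l2, b) entries, column 2 starts with l1+l2+3.  The remaining W's only
   append larger entries to columns, which moves neither l1+1 nor l1+l2+2, the
   entries whose ranks give the first row; hence the depth is l1 + (l1 + l2)
   if l2 <= b and l1 + (l1 + l2 - b) otherwise.  On (l1, l2), theta is an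
   involution exchanging these two formulas. *)

From mathcomp Require Import all_boot all_order all_algebra zify.
Set Implicit Arguments. Unset Strict Implicit.
Import GRing.Theory.

Section ArgMax.
Variables (T : eqType) (f : T -> nat).

Definition argmax_step (best x : T) : T := if f best < f x then x else best.

Lemma foldl_argmax_in x0 s : foldl argmax_step x0 s \in x0 :: s.
Proof.
elim: s x0 => [|y s IH] x0 /=; first exact: mem_head.
have := IH (argmax_step x0 y); rewrite /argmax_step !inE.
by case: ifP => _ /orP[->|->]; rewrite ?orbT.
Qed.

Lemma foldl_argmax x0 s m : m \in x0 :: s ->
  {in x0 :: s, forall x, x != m -> f x < f m} -> foldl argmax_step x0 s = m.
Proof.
elim: s x0 => [|y s IH] x0 /=; first by rewrite inE => /eqP.
move=> Hm Hlt; have Hstep : argmax_step x0 y \in [:: x0; y].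
  by rewrite /argmax_step !inE; case: ifP; rewrite eqxx ?orbT.
apply: IH => [|x]; last first.
  rewrite inE => /orP[/eqP->|Hx]; last by apply: Hlt; rewrite !inE Hx !orbT.
  by move: Hstep; rewrite !inE => /orP[] /eqP->; apply: Hlt; rewrite !inE eqxx ?orbT.
case Hms: (m \in s); first by rewrite inE Hms orbT.
suff -> : argmax_step x0 y = m by exact: mem_head.
move: Hm; rewrite !inE Hms orbF /argmax_step.
case: (eqVneq x0 y) => [<-|Hxy]; first by rewrite orbb if_same => /eqP.
case/orP=> /eqP Em; subst m.
- have Hy : f y < f x0 by apply: Hlt; rewrite 1?eq_sym // !inE eqxx orbT.
  by rewrite ltnNge ltnW.
- by rewrite Hlt // mem_head.
Qed.
End ArgMax.

Lemma eq_in_foldl (T : eqType) (R : Type) (f g : R -> T -> R) (z : R) (s : seq T) :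
  (forall x, x \in s -> forall r, f r x = g r x) -> foldl f z s = foldl g z s.
Proof.
elim: s z => //= x s IH z Hfg.
by rewrite Hfg ?mem_head // IH // => y Hy; apply: Hfg; rewrite inE Hy orbT.
Qed.

Lemma last_iota m n : last m (iota m.+1 n) = m + n.
Proof. by elim: n m => [|n IH] m /=; rewrite ?addn0 ?IH ?addSnnS. Qed.

Lemma index_iota_addn m n i : i < n -> index (m + i) (iota m n) = i.
Proof. by move=> Hi; rewrite -(nth_iota 0 m Hi) index_uniq ?iota_uniq ?size_iota. Qed.

Lemma sletters_cat p q : sletters (p ++ q) = sletters p ++ sletters q.
Proof. exact: pmap_cat. Qed.

Lemma sletters_nseqW n : sletters (nseq n W) = [::].
Proof. by elim: n. Qed.

Lemma sletters_nil pi : sletters pi = [::] -> pi = nseq (size pi) W.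
Proof. by elim: pi => [|[j|] p IH] //= /IH {1}->. Qed.

Lemma sletters_cons pi j js : sletters pi = j :: js ->
  exists n pi', pi = nseq n W ++ S j :: pi' /\ sletters pi' = js.
Proof.
elim: pi => [|[i|] p IH] //=; first by case=> -> <-; exists 0, p.
by case/IH => n [p' [-> <-]]; exists n.+1, p'.
Qed.

Section Ranks.
Variable k : seq nat.
Local Open Scope ring_scope.

Fixpoint ranks_nonneg (r : int) (p : seq letter) : bool :=
  if p is l :: p' then (0 <= r) && ranks_nonneg (rstep k r l) p' else true.

Fixpoint area_from (r : int) (p : seq letter) : int :=
  if p is l :: p' then (if l != W then r else 0) + area_from (rstep k r l) p' else 0.

Lemma start_ranks_nonneg pi :
  all (fun r : int => 0 <= r) (start_ranks k pi) = ranks_nonneg 0 pi.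
Proof.
(* generalize the initial rank, not the bound in [0 <= r] *)
rewrite /start_ranks; move: {2 3 4}0 => r.
by elim: pi r => [|l p IH] r //=; rewrite -IH.
Qed.

Lemma areaE pi : area k pi = area_from 0 pi.
Proof.
(* generalize the initial rank, not the unit of the sum *)
rewrite /area /start_ranks; move: {2 3 4}0 => r.
elim: pi r => [|l p IH] r /=; first by rewrite big_nil.
by rewrite big_cons -IH /=; case: (l != W); rewrite ?add0r.
Qed.

Lemma ranks_nonneg_nseqW_cons r n l p :
  ranks_nonneg r (nseq n W ++ l :: p) =
  (n%:Z <= r) && ranks_nonneg (r - n%:Z) (l :: p).
Proof.
elim: n r => [|n IH] r; first by rewrite subr0 [RHS]/= andbA andbb.
rewrite [LHS]/= IH andbA (_ : r - 1 - n%:Z = r - n.+1%:Z); last by lia.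
by congr andb; lia.
Qed.

Lemma ranks_nonneg_nseqW r n : n%:Z <= r -> ranks_nonneg r (nseq n W).
Proof. by elim: n r => //= n IH r Hn; rewrite IH; lia. Qed.

Lemma area_from_nseqW r n p : area_from r (nseq n W ++ p) = area_from (r - n%:Z) p.
Proof.
elim: n r => [|n IH] r /=; first by rewrite subr0.
by rewrite add0r IH; congr area_from; lia.
Qed.

End Ranks.

Lemma count_W_path3 l1 l2 l3 : count (fun l => l == W) (path3 l1 l2 l3) = l1 + l2 + l3.
Proof. by rewrite /path3 !count_cat !count_nseq /=; lia. Qed.

Lemma index_S1_path3 l1 l2 l3 : index (S 1) (path3 l1 l2 l3) = l1.+1.
Proof. by rewrite /path3 !index_cat !mem_nseq !andbF /= !size_nseq; lia. Qed.

Lemma index_S2_path3 l1 l2 l3 : index (S 2) (path3 l1 l2 l3) = (l1 + l2).+2.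
Proof. by rewrite /path3 !index_cat !mem_nseq !andbF /= !size_nseq; lia. Qed.

Lemma ell1_path3 l1 l2 l3 : ell1 (path3 l1 l2 l3) = l1.
Proof. by rewrite /ell1 index_S1_path3. Qed.

Lemma ell2_path3 l1 l2 l3 : ell2 (path3 l1 l2 l3) = l2.
Proof. by rewrite /ell2 index_S1_path3 index_S2_path3; lia. Qed.

Section DyckPaths3.
Variables a b c : nat.
Let k := [:: a; b; c].
Local Open Scope ring_scope.

Lemma is_kDyck_path3 l1 l2 : (l1 <= a)%N -> (l1 + l2 <= a + b)%N ->
  is_kDyck k (path3 l1 l2 (a + b + c - l1 - l2)).
Proof.
move=> Hl1 Hl12; apply/and3P; split.
- by rewrite /path3 !sletters_cat !sletters_nseqW.
- by rewrite count_W_path3; apply/eqP => /=; lia.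
rewrite start_ranks_nonneg /path3 /= ranks_nonneg_nseqW_cons /=.
rewrite ranks_nonneg_nseqW_cons /= ranks_nonneg_nseqW /=; lia.
Qed.

Lemma is_kDyck_path3_inv pi : is_kDyck k pi ->
  exists l1 l2, [/\ (l1 <= a)%N, (l1 + l2 <= a + b)%N &
                  pi = path3 l1 l2 (a + b + c - l1 - l2)].
Proof.
case/and3P => /eqP /sletters_cons [n0 [p1 [-> /sletters_cons [n1 [p2 [->]]]]]].
case/sletters_cons => [n2 [p3 [-> /sletters_nil ->]]] Hcount.
rewrite start_ranks_nonneg ranks_nonneg_nseqW_cons /= ranks_nonneg_nseqW_cons /=.
rewrite ranks_nonneg_nseqW_cons /= => Hranks.
have En0 : n0 = 0%N by lia.
move: Hcount; rewrite En0 -[_ ++ _]/(path3 n1 n2 (size p3)) count_W_path3 /= => /eqP Hcount.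
exists n1, n2; split; try lia.
by rewrite (_ : size p3 = a + b + c - n1 - n2)%N //; lia.
Qed.

Lemma area_path3 l1 l2 l3 :
  area k (path3 l1 l2 l3) = (a%:Z - l1%:Z) + (a%:Z - l1%:Z + b%:Z - l2%:Z).
Proof.
rewrite areaE /path3 /= area_from_nseqW /= area_from_nseqW /=.
by rewrite -[nseq l3 W]cats0 area_from_nseqW /=; lia.
Qed.

End DyckPaths3.

Definition fill_from (k : seq nat) (T : tableau) (s : nat) (p : seq letter) : tableau :=
  foldl (fill_step k) T (zip (iota s (size p)) p).

Lemma fill_fromE k pi : fill k pi = fill_from k (nseq (size k) [::]) 1 pi.
Proof. by []. Qed.

Lemma fill_from_cons k T s l p :
  fill_from k T s (l :: p) = fill_from k (fill_step k T (s, l)) s.+1 p.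
Proof. by []. Qed.

Lemma fill_from_cat k T s p q :
  fill_from k T s (p ++ q) = fill_from k (fill_from k T s p) (s + size p) q.
Proof. by rewrite /fill_from size_cat iotaD zip_cat ?size_iota // foldl_cat. Qed.

Section WestSteps.
Variable k : seq nat.

Definition active (T : tableau) (j : nat) : bool :=
  0 < size (column T j) < (nth 0 k j).+1.

Lemma max_active_colE T :
  max_active_col k T = foldl (argmax_step (bottom T)) (head 0 (active_cols k T))
                             (active_cols k T).
Proof. by []. Qed.

Lemma max_active_col_lt T : 0 < size T -> max_active_col k T < size T.
Proof.
move=> HT; rewrite max_active_colE.
have Hact j : j \in active_cols k T -> j < size T.
  by rewrite mem_filter mem_iota => /andP[_ /andP[]].
have := foldl_argmax_in (bottom T) (head 0 (active_cols k T)) (active_cols k T).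
rewrite inE => /orP[/eqP->|/Hact //].
by case E: (active_cols k T) => [|j s] //=; apply: Hact; rewrite E mem_head.
Qed.

Lemma max_active_col_eq T j : j < size T -> active T j ->
  (forall i : nat, i != j -> active T i -> bottom T i < bottom T j) ->
  max_active_col k T = j.
Proof.
move=> HjT Hj Hmax; rewrite max_active_colE.
have Hjact : j \in active_cols k T.
  by rewrite mem_filter mem_iota; apply/andP; split; [exact: Hj | lia].
have Hhead : head 0 (active_cols k T) \in active_cols k T.
  by case: (active_cols k T) Hjact => // i s _; exact: mem_head.
apply: foldl_argmax; first by rewrite inE Hjact orbT.
move=> i; rewrite inE => /predU1P[->|Hi] Hij; apply: Hmax => //.
- by move: Hhead; rewrite mem_filter => /andP[].
- by move: Hi; rewrite mem_filter => /andP[].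
Qed.

Lemma fill_step_W T i : i != 1 ->
  fill_step k T (i, W) =
  set_nth [::] T (max_active_col k T) (rcons (column T (max_active_col k T)) i).
Proof. by rewrite /fill_step => /negbTE->. Qed.

Lemma fill_from_nseqW T j s n : 1 < s -> j < size T -> 0 < size (column T j) ->
  size (column T j) + n <= (nth 0 k j).+1 -> bottom T j < s ->
  (forall i : nat, i != j -> active T i -> bottom T i < bottom T j) ->
  fill_from k T s (nseq n W) = set_nth [::] T j (column T j ++ iota s n).
Proof.
elim: n T s => [|n IH] T s Hs HjT Hj0 Hcap Hjs Hmax.
  rewrite /fill_from /=; apply: (@eq_from_nth _ [::]) => [|i _].
    by rewrite size_set_nth; apply/esym/maxn_idPr.
  by rewrite nth_set_nth /= cats0; case: eqP => // ->.
have Hj : active T j by rewrite /active Hj0; lia.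
rewrite fill_from_cons fill_step_W; last by rewrite neq_ltn Hs orbT.
rewrite (max_active_col_eq HjT Hj Hmax).
set T' := set_nth _ _ _ _.
have colT' i : column T' i = if i == j then rcons (column T j) s else column T i.
  by rewrite /column nth_set_nth /=; case: eqP.
rewrite (IH T' s.+1) ?colT' ?eqxx ?size_rcons ?size_set_nth //; try lia.
- by rewrite /T' set_set_nth eqxx cat_rcons.
- by rewrite /bottom colT' eqxx last_rcons.
move=> i Hij; rewrite /active /bottom !colT' eqxx (negbTE Hij) /= last_rcons.
by move/(Hmax i Hij); move: Hjs; rewrite /bottom; lia.
Qed.

End WestSteps.

Lemma fill_step_S k T i j : i != 1 ->
  fill_step k T (i, S j) = set_nth [::] T (find (pred1 [::]) T) [:: i].
Proof. by rewrite /fill_step => /negbTE->. Qed.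

Definition tab_extends (n : nat) (T T' : tableau) : Prop :=
  size T' = size T /\
  forall j, exists2 t, column T' j = column T j ++ t & all (leq n) t.

Lemma tab_extends_refl n T : tab_extends n T T.
Proof. by split=> // j; exists [::]; rewrite ?cats0. Qed.

Lemma tab_extends_trans n T1 T2 T3 :
  tab_extends n T1 T2 -> tab_extends n T2 T3 -> tab_extends n T1 T3.
Proof.
move=> [E12 C12] [E23 C23]; split; first by rewrite E23.
move=> j; have [t2 -> A2] := C23 j; have [t1 -> A1] := C12 j.
by exists (t1 ++ t2); rewrite ?catA // all_cat A1 A2.
Qed.

Lemma fill_step_W_extends k n T i : 0 < size T -> n <= i -> i != 1 ->
  tab_extends n T (fill_step k T (i, W)).
Proof.
move=> HT Hni Hi; rewrite fill_step_W //.
have HmT := max_active_col_lt k HT.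
split; first by rewrite size_set_nth; apply/maxn_idPr.
move=> j; rewrite /column nth_set_nth /=.
case: eqP => [->|_]; last by exists [::]; rewrite ?cats0.
by exists [:: i]; rewrite ?cats1 //= Hni.
Qed.

Lemma fill_from_nseqW_extends k n T s m : 0 < size T -> n <= s -> 1 < s ->
  tab_extends n T (fill_from k T s (nseq m W)).
Proof.
elim: m T s => [|m IH] T s HT Hns Hs; first exact: tab_extends_refl.
have HT1 : tab_extends n T (fill_step k T (s, W)).
  by apply: fill_step_W_extends; rewrite // neq_ltn Hs orbT.
rewrite fill_from_cons; apply: (tab_extends_trans HT1).
by apply: IH; [case: HT1 => -> | lia | lia].
Qed.

Section TopRanksExtends.
Variables (n : nat) (T T' : tableau).
Hypothesis HTT' : tab_extends n T T'.

Lemma col_of_extends A : A < n -> col_of T' A = col_of T A.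
Proof.
case: HTT' => Esize Ecol HA; rewrite /col_of.
rewrite -(find_map (fun col => A \in col) id) -(find_map (fun col => A \in col) id).
congr find; apply: (@eq_from_nth _ false); rewrite ?size_map ?Esize // => j Hj.
rewrite !(nth_map [::]) ?Esize //; have [t Ej At] := Ecol j; move: Ej.
rewrite /column => ->; rewrite mem_cat orbC; case: (boolP (A \in t)) => //.
by move/(allP At); lia.
Qed.

Lemma pos_of_extends A : A < n -> pos_of T' A = pos_of T A.
Proof.
move=> HA; rewrite /pos_of col_of_extends //; case: HTT' => Esize Ecol.
case: (boolP (has (fun col => A \in col) T)) => [/(nth_find [::]) HAT|].
  by have [t -> _] := Ecol (col_of T A); rewrite index_cat HAT.
rewrite has_find -leqNgt => HT.
by rewrite /column !nth_default ?Esize.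
Qed.

Lemma head_extends j : column T j != [::] -> head 0 (column T' j) = head 0 (column T j).
Proof. by case: HTT' => _ Ecol; have [t -> _] := Ecol j; case: (column T j). Qed.

Lemma top_ranks_extends :
  (forall j, 0 < j < size T -> 0 < head 0 (column T j) <= n) -> top_ranks T' = top_ranks T.
Proof.
move=> Hhead; rewrite /top_ranks; case: HTT' => -> _.
apply: eq_in_foldl => j; rewrite mem_iota add0n => /= HjT acc.
case: (posnP j) => [//|Hj].
have /andP[Hh0 Hhn] := Hhead j (introT andP (conj Hj HjT)).
have Hne : column T j != [::] by case: (column T j) Hh0.
by rewrite head_extends // col_of_extends ?pos_of_extends //; lia.
Qed.

End TopRanksExtends.

Lemma top_ranks3 x y z h1 h2 r1 r2 (T := [:: x; h1 :: y; h2 :: z]) :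
  nth 0 [:: 0] (col_of T h1.-1) + pos_of T h1.-1 = r1 ->
  nth 0 [:: 0; r1] (col_of T h2.-1) + pos_of T h2.-1 = r2 ->
  top_ranks T = [:: 0; r1; r2].
Proof. by move=> <- <-. Qed.

Lemma col_of3_0 x y z A : A \in x -> col_of [:: x; y; z] A = 0.
Proof. by rewrite /col_of /= => ->. Qed.

Lemma pos_of3_0 x y z A : A \in x -> pos_of [:: x; y; z] A = index A x.
Proof. by move=> Ax; rewrite /pos_of col_of3_0. Qed.

Lemma col_of3_1 x y z A : A \notin x -> A \in y -> col_of [:: x; y; z] A = 1.
Proof. by rewrite /col_of /= => /negbTE-> ->. Qed.

Lemma pos_of3_1 x y z A : A \notin x -> A \in y -> pos_of [:: x; y; z] A = index A y.
Proof. by move=> Ax Ay; rewrite /pos_of col_of3_1. Qed.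

Section Depth3.
Variables a b c : nat.
Let k := [:: a; b; c].

Definition mid_tableau (l1 l2 : nat) : tableau :=
  [:: iota 1 l1.+1 ++ iota (l1 + b + 3) (l2 - b);
      iota (l1 + 2) (minn l2 b).+1;
      [:: l1 + l2 + 3]].

Lemma fill_through_S1 l1 : l1 <= a ->
  fill_from k (nseq 3 [::]) 1 (S 0 :: nseq l1 W ++ [:: S 1]) =
  [:: iota 1 l1.+1; [:: l1 + 2]; [::]].
Proof.
move=> Hl1; rewrite fill_from_cons fill_from_cat /=.
rewrite (@fill_from_nseqW _ _ 0) //=; last first.
  by move=> [|[|[|i]]] //; rewrite /active /column /= nth_nil.
rewrite fill_from_cons size_nseq fill_step_S; last by lia.
by rewrite /= addnC.
Qed.

Lemma fill_through_S2 l1 l2 : l1 + l2 <= a + b ->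
  fill_from k [:: iota 1 l1.+1; [:: l1 + 2]; [::]] (l1 + 3) (nseq l2 W ++ [:: S 2]) =
  mid_tableau l1 l2.
Proof.
move=> Hl12.
have -> : nseq l2 W = nseq (minn l2 b) W ++ nseq (l2 - b) W.
  by rewrite -nseqD; congr nseq; lia.
rewrite -catA fill_from_cat (@fill_from_nseqW _ _ 1) //=; first last.
- move=> [|[|[|i]]] //= _; rewrite /active /column /= ?nth_nil //.
  by rewrite /bottom /= last_iota; lia.
- by rewrite /bottom /=; lia.
- lia.
- lia.
rewrite size_nseq -/(iota 1 l1.+1) /mid_tableau; case: (leqP l2 b) => Hb.
- have -> : l2 - b = 0 by lia.
  rewrite cats0 fill_from_cons fill_step_S /=; last by lia.
  by rewrite [l1 + 3 + l2]addnAC -[(l1 + 2).+1]addnS.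
- rewrite fill_from_cat (@fill_from_nseqW _ _ 0) //=; first last.
  + move=> [|[|[|i]]] //= _; rewrite /active /column /= ?nth_nil //.
    by rewrite size_iota ltnn.
  + by rewrite /bottom /= last_iota; lia.
  + by rewrite size_iota; lia.
  + lia.
  rewrite size_nseq fill_from_cons fill_step_S /=; last by lia.
  have -> : l1 + 3 + b + (l2 - b) = l1 + l2 + 3 by lia.
  by rewrite [l1 + 3 + b]addnAC -[(l1 + 2).+1]addnS.
Qed.

Lemma fill_path3_extends l1 l2 l3 : l1 <= a -> l1 + l2 <= a + b ->
  tab_extends (l1 + l2 + 4) (mid_tableau l1 l2) (fill k (path3 l1 l2 l3)).
Proof.
move=> Hl1 Hl12.
have -> : path3 l1 l2 l3 =
  (S 0 :: nseq l1 W ++ [:: S 1]) ++ (nseq l2 W ++ [:: S 2]) ++ nseq l3 W.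
  by rewrite /path3 /= -!catA.
rewrite fill_fromE fill_from_cat fill_through_S1 // fill_from_cat.
have -> : 1 + size (S 0 :: nseq l1 W ++ [:: S 1]) = l1 + 3.
  by rewrite /= size_cat size_nseq /=; lia.
rewrite fill_through_S2 // size_cat size_nseq.
by apply: fill_from_nseqW_extends => /=; lia.
Qed.

Lemma top_ranks_mid l1 l2 :
  top_ranks (mid_tableau l1 l2) = [:: 0; l1; if l2 <= b then l1 + l2 else l1 + l2 - b].
Proof.
rewrite /mid_tableau; set x := _ ++ _; set y := iota _ _.
have Mx : l1.+1 \in x by rewrite mem_cat mem_iota ltnSn.
have Ix : index l1.+1 x = l1.
  by rewrite index_cat mem_iota ltnSn -[X in index X _]add1n index_iota_addn.
have A2 : (l1 + l2 + 3).-1 = l1 + l2 + 2 by lia.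
case: (leqP l2 b) => Hb.
- have Nx : l1 + l2 + 2 \notin x by rewrite mem_cat !mem_iota; lia.
  have My : l1 + l2 + 2 \in y by rewrite mem_iota; lia.
  have Iy : index (l1 + l2 + 2) y = l2.
    by rewrite (_ : l1 + l2 + 2 = l1 + 2 + l2) ?index_iota_addn //; lia.
  apply: top_ranks3; first by rewrite addn2 col_of3_0 ?pos_of3_0.
  by rewrite A2 col_of3_1 ?pos_of3_1 // Iy.
- have Mx2 : l1 + l2 + 2 \in x by rewrite mem_cat !mem_iota; lia.
  have Ix2 : index (l1 + l2 + 2) x = l1 + l2 - b.
    rewrite (_ : l1 + l2 + 2 = l1 + b + 3 + (l2 - b).-1); last by lia.
    by rewrite index_cat mem_iota ifF ?index_iota_addn ?size_iota; lia.
  apply: top_ranks3; first by rewrite addn2 col_of3_0 ?pos_of3_0.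
  by rewrite A2 col_of3_0 ?pos_of3_0 // Ix2.
Qed.

Lemma depth_path3 l1 l2 l3 : l1 <= a -> l1 + l2 <= a + b ->
  depth k (path3 l1 l2 l3) = l1 + (if l2 <= b then l1 + l2 else l1 + l2 - b).
Proof.
move=> Hl1 Hl12; rewrite /depth (top_ranks_extends (fill_path3_extends l3 Hl1 Hl12)).
  by rewrite top_ranks_mid /= addn0.
by move=> [|[|[|j]]] //= _; lia.
Qed.

End Depth3.

Section Theta.
Variables a b c : nat.
Let k := [:: a; b; c].

Definition admissible (l : nat * nat) : bool := (l.1 <= a) && (l.1 + l.2 <= a + b).

Definition dyck3 (l : nat * nat) : seq letter := path3 l.1 l.2 (a + b + c - l.1 - l.2).

Definition theta3 (l : nat * nat) : nat * nat :=
  if l.2 <= b then (a - l.1, b - l.2) else (a + b - l.1 - l.2, l.2).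

Lemma dyck3_inj : injective dyck3.
Proof.
move=> [l1 l2] [m1 m2] E; have := congr1 ell1 E; have := congr1 ell2 E.
by rewrite /dyck3 !ell1_path3 !ell2_path3 /= => -> ->.
Qed.

Lemma is_kDyck_dyck3 l : admissible l -> is_kDyck k (dyck3 l).
Proof. by case/andP; exact: is_kDyck_path3. Qed.

Lemma is_kDyck_dyck3_inv pi : is_kDyck k pi -> exists2 l, admissible l & pi = dyck3 l.
Proof.
by case/is_kDyck_path3_inv => l1 [l2 [H1 H2 ->]]; exists (l1, l2) => //; apply/andP.
Qed.

Lemma theta3_admissible l : admissible l -> admissible (theta3 l).
Proof.
case: l => l1 l2 /andP[/= H1 H2]; rewrite /theta3 /admissible.
by case: (leqP l2 b) => /= Hb; lia.
Qed.

Lemma theta3K : {in admissible, involutive theta3}.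
Proof.
move=> [l1 l2] /andP[/= H1 H2]; rewrite /theta3 /=.
by case: (leqP l2 b) => Hb /=; [rewrite leq_subr | rewrite leqNgt Hb /=]; congr pair; lia.
Qed.

Lemma theta_dyck3 l : admissible l -> theta a b c (dyck3 l) = dyck3 (theta3 l).
Proof.
case: l => l1 l2 /andP[/= H1 H2].
rewrite /theta /dyck3 /theta3 ell1_path3 ell2_path3 /=.
by case: (leqP l2 b) => Hb /=; congr path3; lia.
Qed.

Lemma area_eq_depth_theta3 l :
  admissible l -> area k (dyck3 l) = Posz (depth k (dyck3 (theta3 l))).
Proof.
move=> Hl; have /andP[H1' H2'] := theta3_admissible Hl.
case: l Hl H1' H2' => l1 l2 /andP[/= H1 H2] H1' H2'.
rewrite /dyck3 area_path3 depth_path3 // /theta3 /=.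
by case: (leqP l2 b) => Hb /=; rewrite ?leq_subr ?(leqNgt l2 b) ?Hb /=; lia.
Qed.

End Theta.

Theorem proposition5p7 (a b c : nat) :
  0 < a -> 0 < b -> 0 < c ->
  (forall pi, is_kDyck [:: a; b; c] pi ->
     exists! l : nat * nat,
       [/\ l.1 <= a, l.1 + l.2 <= a + b &
           pi = path3 l.1 l.2 (a + b + c - l.1 - l.2)]) /\
  (forall pi, is_kDyck [:: a; b; c] pi ->
     [/\ is_kDyck [:: a; b; c] (theta a b c pi),
         theta a b c (theta a b c pi) = pi,
         area [:: a; b; c] pi = Posz (depth [:: a; b; c] (theta a b c pi)) &
         Posz (depth [:: a; b; c] pi) = area [:: a; b; c] (theta a b c pi)]).
Proof.
move=> _ _ _; split=> pi /is_kDyck_dyck3_inv [l Hl ->].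
- exists l; split; first by case/andP: Hl.
  by move=> l' [_ _ /(@dyck3_inj a b c)].
have Hl' := theta3_admissible Hl.
rewrite !theta_dyck3 // theta3K //; split=> //.
- exact: is_kDyck_dyck3.
- exact: area_eq_depth_theta3.
- by rewrite area_eq_depth_theta3 // theta3K.
Qed.
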